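(* Let $\mathbb{F}\in\{\mathbb{R},\mathbb{C}\}$ and let $X$ be a Banach algebra over $\mathbb{F}$ with unit element $\mathbf{1}$. Let $h:X\to X$ and $\phi,\psi:X^2\to[0,\infty)$ satisfy $$\|h(xyx)-h(x)yx-xh(y)x-xyh(x)\|\le\psi(x,y),$$ $$\|h(\lambda a x+by)-\lambda A h(x)-Bh(y)\|\le\phi(x,y)$$ for all $x,y\in X$ and all $\lambda\in\Lambda$, where $a,b,A,B\in\mathbb{F}$ are fixed with $ab\neq0$ and $\Lambda\subseteq\mathbb{F}$ is nonempty. Assume there is $\xi\in\Lambda\setminus\{0\}$ such that $d:=\xi A+B=\xi a+b$ satisfies $d\neq 0$ and $d\neq 1$, and that for all $x,y\in X$: $$\Phi(x):=\sum_{k=0}^{\infty}|d|^{-k-1}\phi(d^kx,d^kx)<\infty,\qquad \liminf_{k\to\infty}|d|^{-k}\phi(d^kx,d^ky)=0,$$ $$\liminf_{k\to\infty}|d|^{-3k}\psi(d^kx,d^ky)=0,\qquad \liminf_{k\to\infty}|d|^{-2k}\psi(d^kx,y)=0.$$ Then $h$ is a Jordan triple derivation. Furthermore, if $\Lambda$ has a bounded subset $\Lambda_0$ with $\Lambda_0\in\mathcal{B}_{\mathbb{F}}$, then $h$ is a linear Jordan triple derivation.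
   Context: A Jordan triple derivation on an algebra $X$ is an additive map $D:X\to X$ with $D(xyx)=D(x)yx+xD(y)x+xyD(x)$ for all $x,y\in X$; it is linear if moreover $D(\lambda x)=\lambda D(x)$ for all scalars $\lambda$ and $x\in X$. $\mathcal{B}_{\mathbb{F}}$ denotes the family of all sets $\Lambda\subseteq\mathbb{F}$ such that every additive function $f:\mathbb{F}\to X$ which is bounded on $\Lambda$ is continuous. *)

From HB Require Import structures.
From mathcomp Require Import all_boot all_order all_algebra.
From mathcomp Require Import complex.
From mathcomp Require Import all_classical all_reals all_analysis.
Import numFieldTopology.Exports numFieldNormedType.Exports.
Import Order.TTheory GRing.Theory Num.Theory.
Set Implicit Arguments. Unset Strict Implicit. Unset Printing Implicit Defensive.
Local Open Scope ring_scope.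
Local Open Scope classical_set_scope.

Record banach_algebra (F : numFieldType) (X : completeNormedModType F) := {
  bmul : X -> X -> X;
  bone : X;
  bmulA : associative bmul;
  bmul1l : left_id bone bmul;
  bmul1r : right_id bone bmul;
  bmulDl : left_distributive bmul +%R;
  bmulDr : right_distributive bmul +%R;
  bmulZl : forall (c : F) (x y : X), bmul (c *: x) y = c *: bmul x y;
  bmulZr : forall (c : F) (x y : X), bmul x (c *: y) = c *: bmul x y;
  bnormM : forall x y : X, `|bmul x y| <= `|x| * `|y|
}.

Notation "x *[ M ] y" := (bmul M x y) (at level 40, left associativity,
  format "x  *[ M ]  y").

Definition additive_map (F : numFieldType) (X : completeNormedModType F)
  (D : X -> X) : Prop := forall x y : X, D (x + y) = D x + D y.

Definition jordan_triple_derivation (F : numFieldType)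
  (X : completeNormedModType F) (M : banach_algebra X) (D : X -> X) : Prop :=
  additive_map D /\
  forall x y : X,
    D (x *[M] y *[M] x) = D x *[M] y *[M] x + x *[M] D y *[M] x + x *[M] y *[M] D x.

Definition linear_jordan_triple_derivation (F : numFieldType)
  (X : completeNormedModType F) (M : banach_algebra X) (D : X -> X) : Prop :=
  jordan_triple_derivation M D /\ forall (c : F) (x : X), D (c *: x) = c *: D x.

Definition in_B_F (F : numFieldType) (X : completeNormedModType F)
  (L : set F) : Prop :=
  forall f : F -> X,
    (forall s t : F, f (s + t) = f s + f t) ->
    (exists C : F, forall s, L s -> `|f s| <= C) ->
    continuous f.

(* liminf_{k -> oo} u k = 0, for a sequence u of nonnegative scalars:
   for every N, inf_{k >= N} u k = 0. *)
Definition liminf_eq0 (F : numFieldType) (u : nat -> F) : Prop :=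
  forall e : F, 0 < e -> forall N : nat, exists2 k : nat, (N <= k)%N & u k < e.

(* The rescalings [d^-n h (d^n x)] have increments dominated by the terms of
   the convergent series defining [Phi], so they converge to some [T].  Rescaling
   the Jordan defect of [h] in both arguments (weight [d^-3k]) and in the outer
   argument only (weight [d^-2k]) shows that the defect of [T] vanishes, also
   with [h] in the middle slot; comparing the two at [x = 1] gives [T = h].  The
   same limit makes the functional equation exact, and [d <> 1] then forces
   additivity.  For linearity, [u c := h (c 1)] is additive, bounded on
   [Lambda0] hence continuous, and satisfies [u (c^2) = 2 c u c]; so it vanishes
   at [1], at [i], on their rational span, hence everywhere; polarizing
   [h (w^2) = h w w + w h w] at [w = x + c 1] gives [h (c x) = c h x]. *)

From HB Require Import structures.
From mathcomp Require Import all_boot all_order all_algebra.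
From mathcomp Require Import complex.
From mathcomp Require Import all_classical all_reals all_analysis.
From mathcomp Require Import ring lra.
Import numFieldTopology.Exports numFieldNormedType.Exports.
Import Order.TTheory GRing.Theory Num.Theory.
Set Implicit Arguments. Unset Strict Implicit. Unset Printing Implicit Defensive.
Local Open Scope ring_scope.
Local Open Scope classical_set_scope.

Section SequenceLimits.
Variables (F : numFieldType) (X : completeNormedModType F).

Lemma cvgn_increments_dominated (u : nat -> X) (w : nat -> F) :
  (forall k, 0 <= w k) -> cvgn (series w) ->
  (forall k, `|u k.+1 - u k| <= w k) -> cvgn u.
Proof.
move=> w_ge0 /cvg_cauchy/cauchy_seriesP w_cauchy uw.
have u_series : cvgn (series (telescope u)).
  apply/cauchy_cvgP/cauchy_seriesP => e /w_cauchy; apply: filterS => mn.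
  apply: le_lt_trans; rewrite (le_trans (ler_norm_sum _ _ _)) //.
  rewrite ger0_norm ?sumr_ge0 //; apply: ler_sum => k _; exact: uw.
have -> : u = fun n => u 0%N + series (telescope u) n.
  by apply: funext => n; rewrite -eq_sum_telescope.
exact: is_cvgD (is_cvg_cst _) u_series.
Qed.

Lemma cvg_eq0_of_liminf_norm (u : nat -> X) (U : X) (w : nat -> F) :
  u @ \oo --> U -> (forall k, `|u k| <= w k) -> liminf_eq0 w -> U = 0.
Proof.
move=> uU uw w0; apply/eqP; apply: contraT => U_neq0.
have e_gt0 : 0 < `|U| / 2 by rewrite divr_gt0 // normr_gt0.
have [N _ UuN] := (cvgrPdist_lt _ _).1 uU _ e_gt0.
have [k Nk wk] := w0 _ e_gt0 N.
have : `|U| < `|U| / 2 + `|U| / 2.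
  rewrite -{1}(subrK (u k) U); apply: le_lt_trans (ler_normD _ _) _.
  exact: ltrD (UuN k Nk) (le_lt_trans (uw k) wk).
by rewrite -splitr ltxx.
Qed.

Lemma cvgn_subseq_mul (m : nat) (u : nat -> X) (U : X) :
  u @ \oo --> U -> (fun k => u (m.+1 * k)%N) @ \oo --> U.
Proof.
move=> uU; apply/cvgrPdist_lt => e e_gt0.
have [N _ UuN] := (cvgrPdist_lt _ _).1 uU _ e_gt0.
by exists N => // k /= Nk; apply: UuN; rewrite /= (leq_trans Nk) // leq_pmull.
Qed.

End SequenceLimits.

Section BanachAlgebra.
Variables (F : numFieldType) (X : completeNormedModType F) (M : banach_algebra X).

Lemma bmulNl x y : (- x) *[M] y = - (x *[M] y).
Proof. by rewrite -scaleN1r bmulZl scaleN1r. Qed.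

Lemma bmulNr x y : x *[M] (- y) = - (x *[M] y).
Proof. by rewrite -scaleN1r bmulZr scaleN1r. Qed.

Lemma bmulBl x y z : (x - y) *[M] z = x *[M] z - y *[M] z.
Proof. by rewrite bmulDl bmulNl. Qed.

Lemma bmulBr x y z : z *[M] (x - y) = z *[M] x - z *[M] y.
Proof. by rewrite bmulDr bmulNr. Qed.

Lemma bmul0l x : 0 *[M] x = 0.
Proof. by have := bmulBl x x x; rewrite !subrr. Qed.

Lemma bmul0r x : x *[M] 0 = 0.
Proof. by have := bmulBr x x x; rewrite !subrr. Qed.

Lemma cvg_bmull (u : nat -> X) U y : u @ \oo --> U ->
  (fun k => u k *[M] y) @ \oo --> U *[M] y.
Proof.
move=> uU; apply/cvgrPdist_lt => e e_gt0.
have y1_gt0 : 0 < `|y| + 1 by rewrite ltr_wpDl.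
have Uu_near := (cvgrPdist_lt _ _).1 uU _ (divr_gt0 e_gt0 y1_gt0).
near=> k.
have : `|U - u k| < e / (`|y| + 1) by near: k; exact: Uu_near.
rewrite -bmulBl ltr_pdivlMr //; apply: le_lt_trans; apply: le_trans (bnormM _ _ _) _.
by rewrite ler_wpM2l // lerDl.
Unshelve. all: by end_near.
Qed.

Lemma cvg_bmulr (u : nat -> X) U y : u @ \oo --> U ->
  (fun k => y *[M] u k) @ \oo --> y *[M] U.
Proof.
move=> uU; apply/cvgrPdist_lt => e e_gt0.
have y1_gt0 : 0 < `|y| + 1 by rewrite ltr_wpDl.
have Uu_near := (cvgrPdist_lt _ _).1 uU _ (divr_gt0 e_gt0 y1_gt0).
near=> k.
have : `|U - u k| < e / (`|y| + 1) by near: k; exact: Uu_near.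
rewrite -bmulBr ltr_pdivlMr //; apply: le_lt_trans; apply: le_trans (bnormM _ _ _) _.
by rewrite mulrC ler_wpM2l // lerDl.
Unshelve. all: by end_near.
Qed.

(* The three slots are kept apart because rescaling only the outer argument
   leads to the mixed defect [jordan_defect T T h]. *)
Definition jordan_defect (f g g' : X -> X) x y :=
  f (x *[M] y *[M] x) - g x *[M] y *[M] x - x *[M] g' y *[M] x - x *[M] y *[M] g x.

Lemma cvg_jordan_defect (f g g' : nat -> X -> X) (T U U' : X -> X) x y :
  f ^~ (x *[M] y *[M] x) @ \oo --> T (x *[M] y *[M] x) ->
  g ^~ x @ \oo --> U x -> g' ^~ y @ \oo --> U' y ->
  (fun k => jordan_defect (f k) (g k) (g' k) x y) @ \oo --> jordan_defect T U U' x y.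
Proof.
move=> fT gU g'U'.
apply: cvgB; [apply: cvgB; [apply: cvgB|]|] => //.
- by apply: cvg_bmull; exact: cvg_bmull.
- by apply: cvg_bmull; exact: cvg_bmulr.
- exact: cvg_bmulr.
Qed.

End BanachAlgebra.

Section Rescaling.
Variables (F : numFieldType) (X : completeNormedModType F).
Variables (h : X -> X) (d : F).

Definition rescale n x := (d ^+ n)^-1 *: h (d ^+ n *: x).

Hypothesis d_neq0 : d != 0.

Lemma normZ_invX n (v : X) : `|(d ^+ n)^-1 *: v| = `|d| ^- n * `|v|.
Proof. by rewrite normrZ normfV normrX. Qed.

Lemma rescaleS n x :
  rescale n.+1 x - rescale n x =
  (d ^+ n.+1)^-1 *: (h (d *: (d ^+ n *: x)) - d *: h (d ^+ n *: x)).
Proof.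
rewrite /rescale scalerA -exprS scalerBr scalerA exprS invfM mulrAC.
by rewrite mulVf ?mul1r.
Qed.

Lemma rescale_cvg (phi : X -> F) :
  (forall x, `|h (d *: x) - d *: h x| <= phi x) ->
  (forall x, cvgn (series (fun k => `|d| ^- k.+1 * phi (d ^+ k *: x)))) ->
  forall x, cvgn (rescale ^~ x).
Proof.
move=> h_approx phi_series x; apply: (cvgn_increments_dominated _ (phi_series x)).
- move=> k; rewrite mulr_ge0 ?invr_ge0 ?exprn_ge0 //.
  exact: le_trans (h_approx _).
- by move=> k; rewrite rescaleS normZ_invX ler_wpM2l ?invr_ge0 ?exprn_ge0.
Qed.

Lemma rescale_lincomb (al be al' be' : F) n x y :
  (d ^+ n)^-1 *: (h (al *: (d ^+ n *: x) + be *: (d ^+ n *: y))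
                  - al' *: h (d ^+ n *: x) - be' *: h (d ^+ n *: y)) =
  rescale n (al *: x + be *: y) - al' *: rescale n x - be' *: rescale n y.
Proof.
rewrite /rescale !scalerBr scalerDr !scalerA.
by congr (_ *: h (_ *: _ + _ *: _) - _ *: _ - _ *: _); rewrite mulrC.
Qed.

Variable M : banach_algebra X.

Lemma rescale_jordan_defect k x y :
  (d ^+ (3 * k))^-1 *: jordan_defect M h h h (d ^+ k *: x) (d ^+ k *: y) =
  jordan_defect M (rescale (3 * k)) (rescale k) (rescale k) x y.
Proof.
have dk_neq0 : d ^+ k != 0 by rewrite expf_neq0.
rewrite /jordan_defect /rescale mulnC exprM !(bmulZl, bmulZr, scalerA, scalerBr).
by congr (_ *: h (_ *: _) - _ *: _ - _ *: _ - _ *: _); field.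
Qed.

Lemma rescale_jordan_defect_outer k x y :
  (d ^+ (2 * k))^-1 *: jordan_defect M h h h (d ^+ k *: x) y =
  jordan_defect M (rescale (2 * k)) (rescale k) h x y.
Proof.
have dk_neq0 : d ^+ k != 0 by rewrite expf_neq0.
rewrite /jordan_defect /rescale mulnC exprM -[x *[M] h y *[M] x]scale1r.
rewrite !(bmulZl, bmulZr, scalerA, scalerBr).
by congr (_ *: h (_ *: _) - _ *: _ - _ *: _ - _ *: _); field.
Qed.

End Rescaling.

Section Stability.
Variables (F : numFieldType) (X : completeNormedModType F) (M : banach_algebra X).
Variables (h : X -> X) (phi psi : X -> X -> F) (a b A B d : F) (Lambda : set F).
Hypotheses (d_neq0 : d != 0)
  (h_jordan_approx : forall x y, `|jordan_defect M h h h x y| <= psi x y)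
  (h_lin_approx : forall x y l, Lambda l ->
     `|h (l * a *: x + b *: y) - l * A *: h x - B *: h y| <= phi x y)
  (phi_lim : forall x y, liminf_eq0 (fun k =>
     `|d| ^- k * phi (d ^+ k *: x) (d ^+ k *: y)))
  (psi_lim : forall x y, liminf_eq0 (fun k =>
     `|d| ^- (3 * k) * psi (d ^+ k *: x) (d ^+ k *: y)))
  (psi_lim_outer : forall x y, liminf_eq0 (fun k =>
     `|d| ^- (2 * k) * psi (d ^+ k *: x) y)).
Variable T : X -> X.
Hypothesis rescale_T : forall x, rescale h d n x @[n --> \oo] --> T x.

Lemma limit_jordan_defect x y : jordan_defect M T T T x y = 0.
Proof.
apply: (cvg_eq0_of_liminf_norm (u := fun k => jordan_defect M
  (rescale h d (3 * k)) (rescale h d k) (rescale h d k) x y) _ _ (psi_lim x y)).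
  apply: cvg_jordan_defect => //; exact: (cvgn_subseq_mul 2 (@rescale_T _)).
move=> k; rewrite -rescale_jordan_defect // normZ_invX.
by rewrite ler_wpM2l ?invr_ge0 ?exprn_ge0.
Qed.

Lemma limit_jordan_defect_outer x y : jordan_defect M T T h x y = 0.
Proof.
apply: (cvg_eq0_of_liminf_norm (u := fun k =>
  jordan_defect M (rescale h d (2 * k)) (rescale h d k) h x y) _ _ (psi_lim_outer x y)).
  apply: cvg_jordan_defect => //.
    exact: (cvgn_subseq_mul 1 (@rescale_T _)).
  exact: cvg_cst.
move=> k; rewrite -rescale_jordan_defect_outer // normZ_invX.
by rewrite ler_wpM2l ?invr_ge0 ?exprn_ge0.
Qed.

(* At [x = 1] the two defects differ by exactly [T y - h y]. *)
Lemma limit_eq y : T y = h y.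
Proof.
apply/eqP; rewrite -subr_eq0.
rewrite -(subrr 0) -{1}(limit_jordan_defect_outer (bone M) y).
rewrite -(limit_jordan_defect (bone M) y) /jordan_defect !(bmul1l, bmul1r).
set p := T (bone M) *[M] y; set q := y *[M] T (bone M).
rewrite [T y - p - T y]addrAC subrr sub0r opprD !opprK [p + q]addrC addrA subrK.
by rewrite addrAC subrK.
Qed.

Lemma limit_lin_eq x y l : Lambda l ->
  h (l * a *: x + b *: y) = l * A *: h x + B *: h y.
Proof.
move=> Ll; rewrite -!limit_eq; apply/eqP; rewrite -subr_eq0 opprD addrA.
apply/eqP; apply: (cvg_eq0_of_liminf_norm (u := fun k =>
  rescale h d k (l * a *: x + b *: y) - l * A *: rescale h d k x
  - B *: rescale h d k y) _ _ (phi_lim x y)).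
  by apply: cvgB; [apply: cvgB|]; [|apply: cvgZr..]; exact: @rescale_T.
move=> k; rewrite -rescale_lincomb normZ_invX ler_wpM2l ?invr_ge0 ?exprn_ge0 //.
exact: h_lin_approx.
Qed.

End Stability.

Section LinearCombinationEquation.
Variables (K : fieldType) (V : lmodType K) (f : V -> V) (al be al' be' : K).
Hypothesis f_lincomb : forall x y, f (al *: x + be *: y) = al' *: f x + be' *: f y.

Lemma lincomb_eq_map0 : al' + be' != 1 -> f 0 = 0.
Proof.
move=> albe'_neq1; have E := f_lincomb 0 0; rewrite !scaler0 addr0 -scalerDl in E.
have : (al' + be' - 1) *: f 0 = 0 by rewrite scalerBl -E scale1r subrr.
by move/eqP; rewrite scaler_eq0 subr_eq0 (negPf albe'_neq1) => /eqP.
Qed.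

Lemma lincomb_eq_additive : al != 0 -> be != 0 -> al' + be' != 1 ->
  forall x y, f (x + y) = f x + f y.
Proof.
move=> al_neq0 be_neq0 /lincomb_eq_map0 f0 x y.
have f_al z : f (al *: z) = al' *: f z.
  by rewrite -[al *: z]addr0 -(scaler0 _ be) f_lincomb f0 scaler0 addr0.
have f_be z : f (be *: z) = be' *: f z.
  by rewrite -[be *: z]add0r -(scaler0 _ al) f_lincomb f0 scaler0 add0r.
have := f_lincomb (al^-1 *: x) (be^-1 *: y).
by rewrite -f_al -f_be !scalerA !mulfV // !scale1r.
Qed.

End LinearCombinationEquation.

Lemma lmod_mulrn_eq0 (R : numFieldType) (V : lmodType R) (v : V) n :
  (v *+ n == 0) = (n == 0%N) || (v == 0).
Proof. by rewrite -scaler_nat scaler_eq0 pnatr_eq0. Qed.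

Section JordanTripleDerivation.
Variables (F : numFieldType) (X : completeNormedModType F) (M : banach_algebra X).
Variable h : X -> X.
Hypothesis h_jordan : jordan_triple_derivation M h.

Lemma jordan_derivation1 : h (bone M) = 0.
Proof.
have := h_jordan.2 (bone M) (bone M); rewrite !(bmul1l, bmul1r) => /esym/eqP.
by rewrite -subr_eq0 addrK -mulr2n lmod_mulrn_eq0 => /eqP.
Qed.

Lemma jordan_derivation_sqr w : h (w *[M] w) = h w *[M] w + w *[M] h w.
Proof.
have := h_jordan.2 w (bone M).
by rewrite jordan_derivation1 bmul0r bmul0l addr0 !(bmul1l, bmul1r).
Qed.

Lemma jordan_derivation_scalar_sqr c :
  h ((c * c) *: bone M) = c *: h (c *: bone M) + c *: h (c *: bone M).
Proof.
have := jordan_derivation_sqr (c *: bone M).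
by rewrite !(bmulZl, bmulZr, bmul1l, bmul1r, scalerA).
Qed.

Lemma jordan_derivation_linear : (forall c, h (c *: bone M) = 0) ->
  forall c x, h (c *: x) = c *: h x.
Proof.
move=> h_scalar c x; have := jordan_derivation_sqr (x + c *: bone M).
rewrite !(bmulDl, bmulDr, bmulZl, bmulZr, bmul1l, bmul1r, scalerA) !h_jordan.1.
rewrite jordan_derivation_sqr !h_scalar !addr0 -!addrA => /addrI.
rewrite [c *: h x + _]addrCA => /addrI E.
suff : (h (c *: x) - c *: h x) *+ 2 = 0.
  by move/eqP; rewrite lmod_mulrn_eq0 subr_eq0 => /eqP.
by rewrite mulrnBl mulr2n E mulr2n subrr.
Qed.

End JordanTripleDerivation.

Section AdditiveScalarFunction.
Variables (F : numFieldType) (X : normedModType F) (u : F -> X).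
Hypothesis u_add : forall s t, u (s + t) = u s + u t.

Lemma additive0 : u 0 = 0.
Proof.
by have := u_add 0 0; rewrite addr0 => /eqP; rewrite eq_sym -subr_eq0 addrK => /eqP.
Qed.

Lemma additiveN s : u (- s) = - u s.
Proof. by apply/eqP; rewrite -subr_eq0 opprK -u_add addNr additive0. Qed.

Lemma additiveMn s n : u (s *+ n) = u s *+ n.
Proof. by elim: n => [|n IH]; rewrite ?mulr0n ?additive0 // !mulrS u_add IH. Qed.

Lemma additiveMz s (z : int) : u (z%:~R * s) = u s *~ z.
Proof.
case: z => n; first by rewrite mulr_natl additiveMn.
by rewrite NegzE mulrNz mulNr additiveN mulr_natl additiveMn mulrNz.
Qed.

Lemma additive_ratrM_eq0 w q : u w = 0 -> u (ratr q * w) = 0.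
Proof.
move=> uw0; have den_neq0 : (denq q)%:~R != 0 :> F by rewrite intr_eq0 denq_neq0.
have : u (ratr q * w) *~ denq q = 0.
  rewrite -additiveMz (_ : _ * _ = (numq q)%:~R * w); last by rewrite /ratr; field.
  by rewrite additiveMz uw0 mul0rz.
have [n ->] : exists n, denq q = n.+1.
  by move: (denq_gt0 q); case: (denq q) => [[|n]|] //; exists n.
by move/eqP; rewrite -pmulrn lmod_mulrn_eq0 => /eqP.
Qed.

End AdditiveScalarFunction.

Lemma continuous_eq0_of_dense_zeros (F : numFieldType) (X : normedModType F)
  (u : F -> X) : continuous u ->
  (forall s e, 0 < e -> exists t, `|s - t| < e /\ u t = 0) -> forall s, u s = 0.
Proof.
move=> u_cont zeros_dense s; apply/eqP; apply: contraT => us_neq0.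
have us_gt0 : 0 < `|u s| by rewrite normr_gt0.
have [del del_gt0 near_s] :=
  (nbhs_normP _ _).1 ((cvgrPdist_lt _ _).1 (u_cont s) _ us_gt0).
have [t [st ut0]] := zeros_dense s del del_gt0.
by have := near_s t st; rewrite /= ut0 subr0 ltxx.
Qed.

Lemma ratr_dense (R : archiRealFieldType) (s e : R) :
  0 < e -> exists q : rat, `|s - ratr q| < e.
Proof.
move=> e_gt0; have /rat_in_itvoo[q] : s - e < s + e by lra.
by rewrite in_itv /= => /andP[? ?]; exists q; rewrite ltr_norml; apply/andP; split; lra.
Qed.

Section ComplexDensity.
Local Open Scope complex_scope.

Lemma normc_real (R : rcfType) (k : R) : `|k%:C| = `|k|%:C.
Proof. by rewrite normc_def /= expr0n addr0 sqrtr_sqr. Qed.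

Lemma complex_ratr_dense (R : realType) (z e : R[i]) :
  0 < e -> exists q1 q2 : rat, `|z - (ratr q1 + ratr q2 * 'i)| < e.
Proof.
case: e => e ei; rewrite ltcE /= => /andP[/eqP-> e_gt0].
have e2_gt0 : 0 < e / 2 by rewrite divr_gt0.
have [q1 zq1] := ratr_dense (complex.Re z) e2_gt0.
have [q2 zq2] := ratr_dense (complex.Im z) e2_gt0.
exists q1, q2.
have -> : z - (ratr q1 + ratr q2 * 'i) =
    (complex.Re z - ratr q1)%:C + (complex.Im z - ratr q2)%:C * 'i.
  rewrite {1}[z]complexE -(fmorph_rat (real_complex R) q1).
  by rewrite -(fmorph_rat (real_complex R) q2) !rmorphB complexiE /=; ring.
apply: le_lt_trans (ler_normD _ _) _.
rewrite normrM normCi mulr1 !normc_real -rmorphD ltcR [e](splitr e).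
exact: ltrD.
Qed.

End ComplexDensity.

Lemma ratr_span_dense (R : realType) (F : numFieldType)
  (hF : F = (R : numFieldType) \/ F = (R[i] : numFieldType)) :
  exists j : F, (j = 0 \/ j * j = -1) /\
   forall s e : F, 0 < e -> exists q1 q2 : rat, `|s - (ratr q1 + ratr q2 * j)| < e.
Proof.
case: hF => ->.
  exists 0; split=> [|s e /(ratr_dense s)[q sq]]; first by left.
  by exists q, 0; rewrite mulr0 addr0.
by exists 'i%C; split; [right; rewrite -expr2 sqr_i | exact: complex_ratr_dense].
Qed.

Lemma additive_scalar_sqr_eq0 (R : realType) (F : numFieldType)
  (hF : F = (R : numFieldType) \/ F = (R[i] : numFieldType))
  (X : normedModType F) (u : F -> X) :
  (forall s t, u (s + t) = u s + u t) -> continuous u ->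
  (forall c, u (c * c) = c *: u c + c *: u c) -> u 1 = 0 -> forall c, u c = 0.
Proof.
move=> u_add u_cont u_sqr u1.
have [j [j_sqr dense]] := ratr_span_dense hF.
have uj : u j = 0.
  case: j_sqr => [-> | jj]; first exact: additive0.
  have j_neq0 : j != 0.
    by apply: contra_eq_neq jj => ->; rewrite mul0r eq_sym oppr_eq0 oner_neq0.
  have := u_sqr j; rewrite jj additiveN // u1 oppr0 -scalerDl => /esym/eqP.
  by rewrite scaler_eq0 -mulr2n mulrn_eq0 (negPf j_neq0) => /eqP.
apply: (continuous_eq0_of_dense_zeros u_cont) => s e e_gt0.
have [q1 [q2 sq]] := dense s e e_gt0.
exists (ratr q1 + ratr q2 * j); split => //.
by rewrite u_add -[ratr q1]mulr1 ?(additive_ratrM_eq0 u_add) ?addr0.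
Qed.

Lemma lincomb_eq_scale_bounded (K : numFieldType) (V : normedModType K) (f : V -> V)
  (a b A B C : K) (L : set K) (v : V) :
  a != 0 -> f 0 = 0 ->
  (forall x y l, L l -> f (l * a *: x + b *: y) = l * A *: f x + B *: f y) ->
  (forall l, L l -> `|l| <= C) ->
  forall l, L l -> `|f (l *: v)| <= C * `|A *: f (a^-1 *: v)|.
Proof.
move=> a_neq0 f0 f_lincomb L_bounded l Ll.
have -> : l *: v = l * a *: (a^-1 *: v) + b *: 0.
  by rewrite scaler0 addr0 scalerA -mulrA mulfV ?mulr1.
rewrite f_lincomb // f0 scaler0 addr0 -scalerA normrZ.
by rewrite ler_wpM2r // L_bounded.
Qed.

Theorem theorem2p3 (R : realType) (F : numFieldType)
  (hF : F = (R : numFieldType) \/ F = (R[i] : numFieldType))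
  (X : completeNormedModType F) (M : banach_algebra X)
  (h : X -> X) (phi psi : X -> X -> F)
  (phi_ge0 : forall x y, 0 <= phi x y) (psi_ge0 : forall x y, 0 <= psi x y)
  (a b A B : F) (Lambda : set F)
  (hab : a * b != 0) (hLambda : Lambda !=set0)
  (hpsi : forall x y : X,
     `|h (x *[M] y *[M] x) - h x *[M] y *[M] x - x *[M] h y *[M] x
        - x *[M] y *[M] h x| <= psi x y)
  (hphi : forall (x y : X) (l : F), Lambda l ->
     `|h (l * a *: x + b *: y) - l * A *: h x - B *: h y| <= phi x y)
  (xi : F) (hxiL : Lambda xi) (hxi0 : xi != 0)
  (hd : xi * A + B = xi * a + b)
  (hd0 : xi * a + b != 0) (hd1 : xi * a + b != 1)
  (hPhi : forall x : X,
     cvgn (series (fun k : nat => `|xi * a + b| ^- k.+1 *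
        phi ((xi * a + b) ^+ k *: x) ((xi * a + b) ^+ k *: x))))
  (hphi_lim : forall x y : X, liminf_eq0 (fun k : nat =>
        `|xi * a + b| ^- k * phi ((xi * a + b) ^+ k *: x) ((xi * a + b) ^+ k *: y)))
  (hpsi_lim1 : forall x y : X, liminf_eq0 (fun k : nat =>
        `|xi * a + b| ^- (3 * k) * psi ((xi * a + b) ^+ k *: x) ((xi * a + b) ^+ k *: y)))
  (hpsi_lim2 : forall x y : X, liminf_eq0 (fun k : nat =>
        `|xi * a + b| ^- (2 * k) * psi ((xi * a + b) ^+ k *: x) y)) :
  jordan_triple_derivation M h /\
  ((exists Lambda0 : set F, Lambda0 `<=` Lambda /\
      (exists C : F, forall l, Lambda0 l -> `|l| <= C) /\ in_B_F X Lambda0) ->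
   linear_jordan_triple_derivation M h).
Proof.
have [a_neq0 b_neq0] : a != 0 /\ b != 0 by apply/andP; rewrite -negb_or -mulf_eq0.
have h_approx x : `|h ((xi * a + b) *: x) - (xi * a + b) *: h x| <= phi x x.
  by have := hphi x x xi hxiL; rewrite -addrA -opprD -!scalerDl hd.
have rescale_T := rescale_cvg hd0 h_approx hPhi.
have h_lin := limit_lin_eq hd0 hpsi hphi hphi_lim hpsi_lim1 hpsi_lim2 rescale_T.
have h_xi x y : h (xi * a *: x + b *: y) = xi * A *: h x + B *: h y := h_lin x y xi hxiL.
have hd1' : xi * A + B != 1 by rewrite hd.
have h0 := lincomb_eq_map0 h_xi hd1'.
have h_add : additive_map h :=
  lincomb_eq_additive h_xi (mulf_neq0 hxi0 a_neq0) b_neq0 hd1'.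
have h_jordan : jordan_triple_derivation M h.
  split=> // x y; move: (limit_jordan_defect hd0 hpsi hpsi_lim1 rescale_T x y).
  rewrite /jordan_defect !(limit_eq hd0 hpsi hpsi_lim1 hpsi_lim2 rescale_T).
  by move/eqP; rewrite -!addrA -!opprD subr_eq0 => /eqP ->; rewrite !addrA.
split=> // -[L0 [L0_sub [[C L0_bounded] L0_BF]]].
split=> //; apply: (jordan_derivation_linear h_jordan).
have u_add s t : h ((s + t) *: bone M) = h (s *: bone M) + h (t *: bone M).
  by rewrite scalerDl h_add.
apply: (additive_scalar_sqr_eq0 (u := fun c => h (c *: bone M)) hF u_add).
- apply: L0_BF => //; exists (C * `|A *: h (a^-1 *: bone M)|).
  apply: lincomb_eq_scale_bounded => // x y l /L0_sub; exact: h_lin.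
- exact: jordan_derivation_scalar_sqr.
- by rewrite scale1r jordan_derivation1.
Qed.
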